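(* Let $k\ge 1$ be an integer. Every $4k$-edge-connected graph contains $k$ pairwise edge-disjoint $(2,2)$-tight spanning subgraphs.
   Context: A connected graph is $m$-edge-connected if it remains connected after the removal of any $m-1$ edges. Graphs are finite and simple. A graph $G$ is $(2,2)$-sparse if $|E(H)|\le\max\{2|V(H)|-2,0\}$ for every subgraph $H$ of $G$, and $(2,2)$-tight if moreover $|E(G)|=2|V(G)|-2$. *)

From mathcomp Require Import all_boot.
Set Implicit Arguments. Unset Strict Implicit. Unset Printing Implicit Defensive.

(* A finite simple graph on vertex type V: its vertex set is [set: V] (or a
   subset X), its edge set is a set of 2-element subsets of V. *)
Definition is_edge_set (V : finType) (F : {set {set V}}) : bool :=
  [forall e in F, #|e| == 2].

Definition adj (V : finType) (F : {set {set V}}) : rel V :=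
  fun x y => (x != y) && ([set x; y] \in F).

Definition connectedG (V : finType) (F : {set {set V}}) : Prop :=
  forall x y : V, connect (adj F) x y.

Definition edge_connected (V : finType) (m : nat) (E : {set {set V}}) : Prop :=
  forall S : {set {set V}}, S \subset E -> #|S| < m -> connectedG (E :\: S).

Definition subgraph_of (V : finType) (F : {set {set V}})
  (X : {set V}) (F' : {set {set V}}) : bool :=
  (F' \subset F) && [forall e in F', e \subset X].

Definition sparse22 (V : finType) (F : {set {set V}}) : Prop :=
  forall (X : {set V}) (F' : {set {set V}}), subgraph_of F X F' ->
    #|F'| <= maxn (2 * #|X| - 2) 0.

(* (2,2)-tight spanning graph ([set: V], F): sparse and |E| = 2|V| - 2
   (stated without truncated subtraction). *)
Definition tight22 (V : finType) (F : {set {set V}}) : Prop :=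
  sparse22 F /\ #|F| + 2 = 2 * #|V|.

From mathcomp Require Import all_boot zify.
Set Implicit Arguments. Unset Strict Implicit. Unset Printing Implicit Defensive.

(* By the Nash-Williams--Tutte theorem a 4k-edge-connected graph has 2k
   edge-disjoint spanning trees, and the union of two edge-disjoint spanning
   trees is (2,2)-tight: it has 2|V|-2 edges, and a vertex set X spans at most
   |X|-1 edges of each tree.

   The tree packing is proved by matroid exchange.  Take m forests with the
   largest total number of edges, and call an edge free if some packing reached
   by single-edge exchanges leaves it unused.  Every component of the free edges
   spans a tree in each forest, so the partition P of V into maximal sets
   spanning a tree in all forests is crossed by no unused edge.  Since E is
   2m-edge-connected, at least m(|P|-1) edges cross P, and together with the
   trees inside the parts the forests have m(|V|-1) edges. *)

Lemma connect_ind (T : finType) (r : rel T) (P : T -> Prop) x :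
  P x -> (forall a b, connect r x a -> P a -> r a b -> P b) ->
  forall y, connect r x y -> P y.
Proof.
move=> Px IH y /connectP[p pth ->].
have : forall a, connect r x a -> P a -> path r a p -> P (last a p).
  elim: p {pth} => [|b p IHp] a ca Pa //= /andP[rab pth].
  apply: IHp pth; first exact: connect_trans ca (connect1 rab).
  exact: IH rab.
by apply=> //; apply: connect0.
Qed.

Lemma disjointsU (T : finType) (A B C : {set T}) :
  [disjoint A :|: B & C] = [disjoint A & C] && [disjoint B & C].
Proof. by rewrite -!setI_eq0 setIUl setU_eq0. Qed.

Lemma sum_bool_card (T : finType) (A : {set T}) (b : pred T) :
  \sum_(e in A) b e = #|[set e in A | b e]|.
Proof. by rewrite -sum1dep_card big_mkcondr. Qed.

Lemma is_edge_setS (V : finType) (A E : {set {set V}}) :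
  A \subset E -> is_edge_set E -> is_edge_set A.
Proof. by move=> sAE /forall_inP E2; apply/forall_inP=> e /(subsetP sAE)/E2. Qed.

Lemma union_closed_fill (T : finType) (P : {set T} -> bool) u (S : {set T}) :
  P [set u] -> u \in S ->
  (forall X Y, P X -> P Y -> u \in X -> u \in Y -> P (X :|: Y)) ->
  (forall y, y \in S -> exists X, [&& P X, u \in X, y \in X & X \subset S]) -> P S.
Proof.
move=> Pu uS PU HS.
have Q0 : [&& P [set u], u \in [set u] & [set u] \subset S] by rewrite Pu set11 sub1set uS.
case: (@arg_maxnP _ [set u] (fun X => [&& P X, u \in X & X \subset S]) (fun X => #|X|) Q0).
move=> M /and3P[PM uM MS] maxM.
suff -> : S = M by [].
apply/eqP; rewrite eqEsubset MS andbT; apply/subsetP=> y yS.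
case: (HS y yS) => X /and4P[PX uX yX XS].
have QXM : [&& P (X :|: M), u \in X :|: M & X :|: M \subset S].
  by rewrite PU // inE uX subUset XS MS.
have : M == X :|: M by rewrite eqEcard subsetUr; exact: maxM _ QXM.
by move/eqP ->; rewrite inE yX.
Qed.

Section Forests.
Variable V : finType.
Implicit Types (F A B : {set {set V}}) (X Y T : {set V}) (f g h : {set V}) (x : V).

Definition spanned F X := #|[set f in F | f \subset X]|.

(* For sets of 2-element edges, acyclicity in counting form. *)
Definition forest F := [forall X : {set V}, spanned F X <= #|X|.-1].

Definition tight F X := spanned F X == #|X|.-1.

Lemma spanned_subset A F X : A \subset F -> spanned A X <= spanned F X.
Proof.
move=> sAF; apply: subset_leq_card; apply/subsetP=> f.
by rewrite !inE => /andP[/(subsetP sAF) -> ->].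
Qed.

Lemma spannedU A B X : spanned (A :|: B) X <= spanned A X + spanned B X.
Proof.
rewrite /spanned; apply: leq_trans (leq_card_setU _ _).1; apply: subset_leq_card.
by apply/subsetP=> f; rewrite !inE => /andP[/orP[]-> ->]; rewrite ?orbT.
Qed.

Lemma spannedU1 F g X : spanned (F :|: [set g]) X <= spanned F X + (g \subset X).
Proof.
apply: leq_trans (spannedU _ _ _) _; rewrite leq_add2l /spanned.
case: (boolP (g \subset X)) => gX.
  apply: leq_trans (_ : _ <= #|[set g]|) _; last by rewrite cards1.
  by apply/subset_leq_card/subsetP=> f; rewrite !inE => /andP[].
rewrite leqn0 cards_eq0; apply/eqP/setP=> f; rewrite !inE.
by apply/andP=> -[/eqP -> ]; rewrite (negbTE gX).
Qed.

Lemma spannedU1_eq F g X :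
  g \notin F -> g \subset X -> spanned (F :|: [set g]) X = (spanned F X).+1.
Proof.
move=> gF gX; rewrite /spanned.
have -> : [set f in F :|: [set g] | f \subset X] = g |: [set f in F | f \subset X].
  apply/setP=> f; rewrite !inE; case: (f =P g) => [->|]; first by rewrite gX orbT.
  by rewrite orbF.
by rewrite cardsU1 inE (negbTE gF).
Qed.

Lemma spannedD1 F h X : h \in F -> h \subset X -> (spanned (F :\ h) X).+1 = spanned F X.
Proof.
move=> hF hX; rewrite /spanned (cardsD1 h [set f in F | f \subset X]) inE hF hX /=.
by congr _.+1; apply: eq_card => f; rewrite !inE; case: (f =P h).
Qed.

Lemma spannedD1_out F h X : ~~ (h \subset X) -> spanned (F :\ h) X = spanned F X.
Proof.
move=> hX; apply: eq_card => f; rewrite !inE.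
by case: (f =P h) => //= ->; rewrite (negbTE hX) andbF.
Qed.

Lemma spannedT F : spanned F [set: V] = #|F|.
Proof. by apply: eq_card => f; rewrite !inE subsetT andbT. Qed.

Lemma spanned_supermodular F X Y :
  spanned F X + spanned F Y <= spanned F (X :|: Y) + spanned F (X :&: Y).
Proof.
rewrite /spanned -cardsUI; apply: leq_add; apply: subset_leq_card; apply/subsetP=> f;
  rewrite !inE.
  by case/orP=> /andP[-> s]; rewrite (subset_trans s) // (subsetUl, subsetUr).
by rewrite subsetI => /andP[/andP[-> ->] /andP[_ ->]].
Qed.

Lemma forest_spanned F X : forest F -> spanned F X <= #|X|.-1.
Proof. by move/forallP. Qed.

Lemma forest_nontight F X : forest F -> ~~ tight F X -> spanned F X < #|X|.-1.
Proof. by move=> fF tX; rewrite ltn_neqAle tX forest_spanned. Qed.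

Lemma tight_set1 F x : is_edge_set F -> tight F [set x].
Proof.
move=> /forall_inP F2; rewrite /tight cards1 /= cards_eq0; apply/eqP/setP=> f.
by rewrite !inE; apply/andP=> -[/F2/eqP f2 /subset_leq_card]; rewrite f2 cards1.
Qed.

Lemma tightUI F X Y : forest F -> tight F X -> tight F Y -> X :&: Y != set0 ->
  tight F (X :|: Y) /\ tight F (X :&: Y).
Proof.
move=> fF /eqP tX /eqP tY /set0Pn[z zXY].
have h := spanned_supermodular F X Y.
have hU := forest_spanned (X :|: Y) fF; have hI := forest_spanned (X :&: Y) fF.
have c := cardsUI X Y.
have pI : 0 < #|X :&: Y| by apply/card_gt0P; exists z.
have pX : #|X :&: Y| <= #|X| by apply/subset_leq_card/subsetIl.
have pY : #|X :&: Y| <= #|Y| by apply/subset_leq_card/subsetIr.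
by rewrite /tight; split; apply/eqP; lia.
Qed.

Lemma tight_split_edge F T (S : {set V}) : forest F -> tight F T ->
  S \subset T -> S != set0 -> T :\: S != set0 ->
  exists2 h, h \in F & [&& h \subset T, h :&: S != set0 & h :&: (T :\: S) != set0].
Proof.
move=> fF /eqP tT sAT nA nB.
apply/exists_inP; apply: contraT => /exists_inPn noh.
have : spanned F T <= spanned F S + spanned F (T :\: S).
  rewrite /spanned; apply: leq_trans (leq_card_setU _ _).1; apply: subset_leq_card.
  apply/subsetP=> f; rewrite !inE => /andP[fF' fT]; rewrite fF' /=.
  have := noh f fF'; rewrite fT /= negb_and !negbK => /orP[] /eqP f0.
    apply/orP; right; apply/subsetP=> x fx; rewrite inE (subsetP fT) // andbT.
    by apply: contraT; rewrite negbK => xA; move/setP: f0 => /(_ x); rewrite !inE fx xA.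
  apply/orP; left; apply/subsetP=> x fx; apply: contraT => xA.
  by move/setP: f0 => /(_ x); rewrite !inE fx xA (subsetP fT).
have := forest_spanned S fF; have := forest_spanned (T :\: S) fF.
have := cardsID S T; rewrite (setIidPr sAT).
by move: nA nB; rewrite -!card_gt0; lia.
Qed.

Lemma nonforestU1_tight F g : forest F -> ~~ forest (F :|: [set g]) ->
  exists X, tight F X && (g \subset X).
Proof.
move=> fF /forallPn[Y]; rewrite -ltnNge => hY.
exists Y; have := spannedU1 F g Y; have := forest_spanned Y fF.
by case: (g \subset Y); rewrite /tight ?andbT => *; apply/eqP; lia.
Qed.

Lemma min_tight F g : forest F -> g != set0 -> (exists X, tight F X && (g \subset X)) ->
  exists T, [/\ tight F T, g \subset T & forall X, tight F X -> g \subset X -> T \subset X].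
Proof.
move=> fF g0 [X0 PX0].
case: (@arg_minnP _ X0 (fun X => tight F X && (g \subset X)) (fun X => #|X|) PX0).
move=> T /andP[tT gT] minT; exists T; split=> // X tX gX.
have XT : X :&: T != set0.
  case/set0Pn: g0 => x gx; apply/set0Pn; exists x; rewrite inE (subsetP gX) ?(subsetP gT) //.
have [_ tI] := tightUI fF tX tT XT.
have : X :&: T == T by rewrite eqEcard subsetIr minT // tI subsetI gX gT.
by move/eqP <-; rewrite subsetIl.
Qed.

Lemma forest_exchange F g T h : forest F -> g \notin F -> tight F T -> g \subset T ->
  (forall X, tight F X -> g \subset X -> T \subset X) ->
  h \in F -> h \subset T -> forest (F :\ h :|: [set g]).
Proof.
move=> fF gF tT gT minT hF hT; apply/forallP=> Y.
have a1 := spannedU1 (F :\ h) g Y.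
have a2 : spanned (F :\ h) Y <= spanned F Y := spanned_subset Y (subD1set F h).
have a3 := forest_spanned Y fF.
case: (boolP (g \subset Y)) => gY; last by move: a1 a2 a3; rewrite (negbTE gY); lia.
case: (boolP (tight F Y)) => tY; last by move: (forest_nontight fF tY) a1 a2; rewrite gY; lia.
have := spannedD1 hF (subset_trans hT (minT Y tY gY)).
by move: a1 a3; rewrite gY; lia.
Qed.

Lemma exchanged_edge_in_tight F g T f : g != set0 -> g \notin F -> f \in F ->
  tight F T -> g \subset T -> forest (F :\ f :|: [set g]) -> f \subset T.
Proof.
move=> g0 gF fF tT gT fF'; apply: contraT => fT.
have gF' : g \notin F :\ f by rewrite !inE negb_and gF orbT.
have := forest_spanned T fF'.
rewrite spannedU1_eq // spannedD1_out // (eqP tT).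
have : 0 < #|T| by apply: leq_trans (subset_leq_card gT); rewrite card_gt0.
lia.
Qed.

End Forests.

Section Packings.
Variables (V I : finType) (E : {set {set V}}).

Definition packing := {ffun I -> {set {set V}}}.
Implicit Types (F : packing) (S : {set {set V}}) (e f g h C X Y T : {set V}).
Implicit Types (i j : I) (u x y z : V).

Definition covered F := \bigcup_i F i.

Definition forest_packing F :=
  [forall i, (F i \subset E) && forest (F i)] &&
  [forall i, forall j, (i != j) ==> [disjoint F i & F j]].

Definition packing_size F := \sum_i #|F i|.

Definition update F i S : packing := [ffun j => if j == i then S else F j].

Definition exchange : rel packing := fun F F' =>
  [&& forest_packing F, forest_packing F' &
  [exists i, exists f, exists g, [&& f \in F i, g \in E, g \notin covered F &
      F' == update F i (F i :\ f :|: [set g])]]].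

Lemma forest_packingP F :
  reflect [/\ forall i, F i \subset E, forall i, forest (F i)
            & forall i j, i != j -> [disjoint F i & F j]]
          (forest_packing F).
Proof.
apply: (iffP andP) => [[/forallP FE /forallP Ff]|[FE Ff Fdisj]].
  split=> [i|i|i j]; try by case/andP: (FE i).
  by move/forallP: (Ff i) => /(_ j)/implyP.
by split; apply/forallP=> i; [rewrite FE Ff | apply/forallP=> j; apply/implyP/Fdisj].
Qed.

Lemma coveredP F e : reflect (exists i, e \in F i) (e \in covered F).
Proof. by apply: (iffP bigcupP) => [[i _ ?]|[i ?]]; exists i. Qed.

Lemma notin_covered F i e : e \notin covered F -> e \notin F i.
Proof. by apply: contra => ei; apply/coveredP; exists i. Qed.

Lemma notin_other F i j e : forest_packing F -> i != j -> e \in F i -> e \notin F j.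
Proof. by case/forest_packingP=> _ _ dF ij ei; rewrite (disjointFr (dF i j ij) ei). Qed.

Lemma packing_size_update F i S :
  packing_size (update F i S) + #|F i| = packing_size F + #|S|.
Proof.
rewrite /packing_size (bigD1 i) //= [in RHS](bigD1 i) //= ffunE eqxx.
under eq_bigr => j ji do rewrite ffunE (negbTE ji).
lia.
Qed.

Lemma forest_packing_update F i S : forest_packing F -> S \subset E -> forest S ->
  (forall j, j != i -> [disjoint S & F j]) -> forest_packing (update F i S).
Proof.
move=> /forest_packingP[FE Ff Fdisj] SE fS dS; apply/forest_packingP.
split=> [j|j|j l jl]; rewrite !ffunE; try by case: (j =P i).
case: (j =P i) => [ji|/eqP ji]; case: (l =P i) => [li|/eqP li].
- by rewrite ji li eqxx in jl.
- by rewrite dS // -ji eq_sym.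
- by rewrite disjoint_sym dS.
- exact: Fdisj.
Qed.

Lemma exchange_sym : symmetric exchange.
Proof.
suff H F F' : exchange F F' -> exchange F' F by move=> F F'; apply/idP/idP; apply: H.
case/and3P=> vF vF' /existsP[i /existsP[f /existsP[g]]] /and4P[fi gE gu /eqP dF'].
have gi := notin_covered i gu.
have fE : f \in E by case/forest_packingP: vF => H _ _; apply: (subsetP (H i)).
rewrite /exchange vF vF' /=.
apply/existsP; exists i; apply/existsP; exists g; apply/existsP; exists f.
rewrite fE dF' ffunE eqxx !inE eqxx orbT /=; apply/andP; split.
  apply/coveredP=> -[j]; rewrite ffunE; case: (j =P i) => [_|/eqP ji].
    by rewrite !inE; case: (f =P g) => [fg|_] /=; [rewrite -fg fi in gi|rewrite eqxx].
  by apply/negP; apply: notin_other vF _ fi; rewrite eq_sym.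
apply/eqP/ffunP=> j; rewrite !ffunE; case: (j =P i) => [->|//].
apply/setP=> e; rewrite !inE.
case: (e =P g) => [->|_] /=.
  by rewrite (negbTE gi); case: (g =P f) => // gf; move: gi; rewrite gf fi.
by case: (e =P f) => [->|] /=; rewrite ?fi ?andbT ?orbF.
Qed.

Lemma packing_size_exchange F F' : exchange F F' -> packing_size F' = packing_size F.
Proof.
case/and3P=> _ _ /existsP[i /existsP[f /existsP[g]]] /and4P[fi _ gu /eqP ->].
have gi := notin_covered i gu.
have := packing_size_update F i (F i :\ f :|: [set g]).
suff -> : #|F i :\ f :|: [set g]| = #|F i| by lia.
by rewrite setUC cardsU1 !inE (negbTE gi) andbF /= (cardsD1 f (F i)) fi.
Qed.

Variable F0 : packing.
Hypothesis F0_packing : forest_packing F0.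
Hypothesis F0_max : forall F, forest_packing F -> packing_size F <= packing_size F0.

Definition reachable F := connect exchange F0 F.

Lemma reachable_max F : reachable F ->
  forest_packing F /\ packing_size F = packing_size F0.
Proof.
apply: (connect_ind (P := fun F => forest_packing F /\ packing_size F = packing_size F0))
  => // F1 F2 _ [_ s1] e12.
by rewrite (packing_size_exchange e12); case/and3P: e12.
Qed.

Lemma reachable_saturated F i g : reachable F -> g \in E -> g \notin covered F ->
  ~~ forest (F i :|: [set g]).
Proof.
move=> /reachable_max[vF sF] gE gu; apply/negP=> fS.
have gj j := notin_covered j gu.
have vU : forest_packing (update F i (F i :|: [set g])).
  case/forest_packingP: (vF) => FE _ Fdisj.
  apply: forest_packing_update => //; first by rewrite subUset FE sub1set gE.
  by move=> j ji; rewrite disjointsU disjoints1 gj andbT Fdisj // eq_sym.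
have := F0_max vU; have := packing_size_update F i (F i :|: [set g]).
by rewrite setUC cardsU1 (negbTE (gj i)) /=; lia.
Qed.

Hypothesis E2 : is_edge_set E.

Lemma edge_neq0 e : e \in E -> e != set0.
Proof. by move/(forall_inP E2)/eqP=> e2; rewrite -card_gt0 e2. Qed.

Definition free_edges := [set g in E | [exists F, reachable F && (g \notin covered F)]].

Definition free_adj : rel V := fun a b => [set a; b] \in free_edges.

Definition free_comp x := [set y | connect free_adj x y].

Lemma free_edge_pair g : g \in free_edges -> exists a b, a != b /\ g = [set a; b].
Proof. by case/setIdP=> /(forall_inP E2) /cards2P. Qed.

Lemma free_comp_closed u g x y : g \in free_edges -> x \in g -> y \in g ->
  x \in free_comp u -> y \in free_comp u.
Proof.
move=> gE0 xg yg; rewrite !inE => cx.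
case: (free_edge_pair gE0) => a [b [_ dg]]; subst g.
move: xg yg cx; rewrite !inE => /orP[] /eqP -> /orP[] /eqP -> cx //.
  by apply: connect_trans cx (connect1 _).
by apply: connect_trans cx (connect1 _); rewrite /free_adj setUC.
Qed.

Lemma exists_least_tight F i g : reachable F -> g \in E -> g \notin covered F ->
  exists T, [/\ tight (F i) T, g \subset T
               & forall X, tight (F i) X -> g \subset X -> T \subset X].
Proof.
move=> rF gE gu; have [/forest_packingP[_ Ff _] _] := reachable_max rF.
apply: min_tight; first exact: Ff; first exact: edge_neq0.
exact: nonforestU1_tight (Ff i) (reachable_saturated i rF gE gu).
Qed.

Section LeastTight.
Variables (F : packing) (i : I) (g T : {set V}).
Hypotheses (rF : reachable F) (gE : g \in E) (gu : g \notin covered F).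
Hypotheses (tT : tight (F i) T) (gT : g \subset T).
Hypothesis minT : forall X, tight (F i) X -> g \subset X -> T \subset X.

Lemma least_tight_free h : h \in F i -> h \subset T -> h \in free_edges.
Proof.
move=> hi hT.
have [vF _] := reachable_max rF; have [FE Ff Fdisj] := forest_packingP _ vF.
have gj j := notin_covered j gu.
pose F' := update F i (F i :\ h :|: [set g]).
have vF' : forest_packing F'.
  apply: forest_packing_update => //.
  - by rewrite subUset sub1set gE andbT (subset_trans (subD1set _ _) (FE i)).
  - exact: forest_exchange (Ff i) (gj i) tT gT minT hi hT.
  move=> j ji; rewrite disjointsU disjoints1 gj andbT.
  by apply: disjointWl (subD1set _ _) _; rewrite Fdisj // eq_sym.
have eF' : exchange F F'.
  rewrite /exchange vF vF' /=; apply/existsP; exists i; apply/existsP; exists h.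
  by apply/existsP; exists g; rewrite hi gE gu eqxx.
rewrite inE (subsetP (FE i)) //=; apply/existsP; exists F'.
have rF' : reachable F' := connect_trans rF (connect1 eF').
rewrite rF' /=; apply/coveredP=> -[j].
rewrite ffunE; case: (j =P i) => [_|/eqP ji]; last first.
  by apply/negP; apply: notin_other vF _ hi; rewrite eq_sym.
by rewrite !inE eqxx /= => /eqP hg; move: (gj i); rewrite -hg hi.
Qed.

Lemma least_tight_in_comp u : T :&: free_comp u != set0 -> T \subset free_comp u.
Proof.
move=> TC; apply: contraT => nTC.
have [/forest_packingP[_ Ff _] _] := reachable_max rF.
have nB : T :\: (T :&: free_comp u) != set0.
  case/subsetPn: nTC => y yT; rewrite inE => yC; apply/set0Pn; exists y.
  by rewrite !inE yT (negbTE yC).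
have [h hi /and3P[hT /set0Pn[x xA] /set0Pn[y yB]]] :=
  tight_split_edge (Ff i) tT (subsetIl _ _) TC nB.
move: xA yB; rewrite !in_setI in_setD in_setI => /andP[xh /andP[_ xC]] /andP[yh /andP[nyC yT]].
by move: nyC; rewrite yT (free_comp_closed (least_tight_free hi hT) xh yh xC).
Qed.

End LeastTight.

Definition tight_linked F i (C : {set V}) x y :=
  [exists X : {set V}, [&& X \subset C, x \in X, y \in X & tight (F i) X]].

Lemma tight_linked_refl F i C x : forest_packing F -> x \in C -> tight_linked F i C x x.
Proof.
case/forest_packingP=> FE _ _ xC; apply/existsP; exists [set x].
by rewrite sub1set xC set11 tight_set1 // (is_edge_setS (FE i)).
Qed.

Lemma tight_linked_trans F i C x y z : forest_packing F ->
  tight_linked F i C x y -> tight_linked F i C y z -> tight_linked F i C x z.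
Proof.
case/forest_packingP=> _ Ff _ /existsP[X /and4P[XC xX yX tX]] /existsP[Y /and4P[YC yY zY tY]].
have XY : X :&: Y != set0 by apply/set0Pn; exists y; rewrite inE yX yY.
have [tU _] := tightUI (Ff i) tX tY XY.
by apply/existsP; exists (X :|: Y); rewrite subUset XC YC !inE xX zY orbT tU.
Qed.

(* If [f] lies in [X], add the least [F i]-tight set containing [g]: it
   contains [f] and stays inside the free component. *)
Lemma tight_exchange F i f g u X : reachable F -> f \in F i -> g \in E ->
  g \notin covered F -> forest (F i :\ f :|: [set g]) ->
  tight (F i) X -> X \subset free_comp u ->
  exists2 Y : {set V}, X \subset Y & (Y \subset free_comp u) && tight (F i :\ f :|: [set g]) Y.
Proof.
move=> rF fi gE gu fF' tX XC.
have [vF _] := reachable_max rF; have [FE Ff _] := forest_packingP _ vF.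
have gi := notin_covered i gu.
have gi' : g \notin F i :\ f by rewrite inE negb_and gi orbT.
case: (boolP (f \subset X)) => fX; last first.
  exists X; rewrite // XC /tight eqn_leq forest_spanned //= -(eqP tX).
  by rewrite -(spannedD1_out (F i) fX) spanned_subset ?subsetUl.
have [T [tT gT minT]] := exists_least_tight i rF gE gu.
have fT := exchanged_edge_in_tight (edge_neq0 gE) gi fi tT gT fF'.
have [z zf] := set0Pn _ (edge_neq0 (subsetP (FE i) f fi)).
have XT : X :&: T != set0 by apply/set0Pn; exists z; rewrite inE (subsetP fT) ?(subsetP fX).
have TC : T \subset free_comp u.
  apply: (least_tight_in_comp rF gE gu tT gT minT).
  by apply/set0Pn; exists z; rewrite inE (subsetP fT) // (subsetP XC) // (subsetP fX).
have [tU _] := tightUI (Ff i) tX tT XT.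
exists (X :|: T); first exact: subsetUl.
rewrite subUset XC TC /tight spannedU1_eq //; last exact: subset_trans gT (subsetUr _ _).
by rewrite spannedD1 //; apply: subset_trans fX (subsetUl _ _).
Qed.

Lemma exchange_tight_linked F F' i u x y : reachable F -> exchange F F' ->
  tight_linked F i (free_comp u) x y -> tight_linked F' i (free_comp u) x y.
Proof.
move=> rF /and3P[_ vF' /existsP[j /existsP[f /existsP[g /and4P[fj gE gu /eqP dF']]]]].
case/existsP=> X /and4P[XC xX yX tX].
case: (j =P i) => [ji|/eqP ji]; last first.
  by apply/existsP; exists X; rewrite XC xX yX dF' ffunE eq_sym (negbTE ji).
subst j; have [_ Ff' _] := forest_packingP _ vF'.
have dFi : F' i = F i :\ f :|: [set g] by rewrite dF' ffunE eqxx.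
have fF' : forest (F i :\ f :|: [set g]) by rewrite -dFi Ff'.
have [Y XY /andP[YC tY]] := tight_exchange rF fj gE gu fF' tX XC.
by apply/existsP; exists Y; rewrite YC (subsetP XY) // (subsetP XY) // dFi.
Qed.

(* Linkedness survives the exchanges leading back from [F] to [F0]. *)
Lemma free_edge_linked u i a b : a \in free_comp u -> free_adj a b ->
  tight_linked F0 i (free_comp u) a b.
Proof.
move=> au /setIdP[gE /existsP[F /andP[rF gu]]].
have [T [tT gT minT]] := exists_least_tight i rF gE gu.
have TC : T \subset free_comp u.
  apply: (least_tight_in_comp rF gE gu tT gT minT).
  by apply/set0Pn; exists a; rewrite inE au (subsetP gT) // !inE eqxx.
have linkF : tight_linked F i (free_comp u) a b.
  by apply/existsP; exists T; rewrite TC tT !(subsetP gT) // !inE eqxx ?orbT.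
have back : connect exchange F F0 by rewrite (sym_connect_sym exchange_sym).
suff [] : reachable F0 /\ tight_linked F0 i (free_comp u) a b by [].
apply: (connect_ind (P := fun G => reachable G /\ tight_linked G i (free_comp u) a b)) back.
  by split.
move=> G G' _ [rG lG] eG; split; first exact: connect_trans rG (connect1 eG).
exact: exchange_tight_linked rG eG lG.
Qed.

Lemma free_comp_linked u i y : y \in free_comp u -> tight_linked F0 i (free_comp u) u y.
Proof.
rewrite inE; apply: (connect_ind (P := tight_linked F0 i (free_comp u) u)).
  by rewrite tight_linked_refl // inE connect0.
move=> a b ua lua ab; apply: tight_linked_trans F0_packing lua _.
by apply: free_edge_linked ab; rewrite inE.
Qed.

Lemma free_comp_tight u i : tight (F0 i) (free_comp u).
Proof.
have [FE Ff _] := forest_packingP _ F0_packing.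
apply: (union_closed_fill (u := u)).
- by rewrite tight_set1 // (is_edge_setS (FE i)).
- by rewrite inE connect0.
- move=> X Y tX tY uX uY.
  have XY : X :&: Y != set0 by apply/set0Pn; exists u; rewrite inE uX uY.
  by case: (tightUI (Ff i) tX tY XY).
- move=> y /(free_comp_linked i) /existsP[X /and4P[XC uX yX tX]].
  by exists X; rewrite tX uX yX XC.
Qed.

Definition tight_all X := [forall i, tight (F0 i) X].

Definition tight_equiv : rel V :=
  fun x y => [exists X : {set V}, [&& x \in X, y \in X & tight_all X]].

Lemma tight_allU X Y : tight_all X -> tight_all Y -> X :&: Y != set0 -> tight_all (X :|: Y).
Proof.
have [_ Ff _] := forest_packingP _ F0_packing.
move=> /forallP tX /forallP tY XY; apply/forallP=> i.
by case: (tightUI (Ff i) (tX i) (tY i) XY).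
Qed.

Lemma tight_all1 x : tight_all [set x].
Proof.
have [FE _ _] := forest_packingP _ F0_packing.
by apply/forallP=> i; rewrite tight_set1 // (is_edge_setS (FE i)).
Qed.

Lemma tight_equiv_refl x : tight_equiv x x.
Proof. by apply/existsP; exists [set x]; rewrite set11 tight_all1. Qed.

Lemma tight_equiv_equivalence : equivalence_rel tight_equiv.
Proof.
have equiv_trans a b c : tight_equiv a b -> tight_equiv a c -> tight_equiv b c.
  move=> /existsP[A /and3P[aA bA tA]] /existsP[B /and3P[aB cB tB]].
  apply/existsP; exists (A :|: B); rewrite !inE bA cB orbT /=.
  by apply: tight_allU => //; apply/set0Pn; exists a; rewrite inE aA aB.
move=> x y z; split; first exact: tight_equiv_refl.
move=> exy; apply/idP/idP => [|eyz]; first exact: equiv_trans _ _ _ exy.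
exact: equiv_trans _ _ _ (equiv_trans _ _ _ exy (tight_equiv_refl x)) eyz.
Qed.

Lemma unused_tight_equiv g : g \in E -> g \notin covered F0 ->
  exists a b, g = [set a; b] /\ tight_equiv a b.
Proof.
move=> gE gu.
have gfree : g \in free_edges.
  by rewrite inE gE; apply/existsP; exists F0; rewrite gu andbT /reachable connect0.
have [a [b [_ dg]]] := free_edge_pair gfree.
exists a, b; split=> //; apply/existsP; exists (free_comp a).
rewrite !inE connect0 connect1 /free_adj -?dg //.
by apply/forallP=> i; apply: free_comp_tight.
Qed.

Lemma tight_equiv_class_tight x : tight_all [set y | tight_equiv x y].
Proof.
apply: (union_closed_fill (u := x)).
- exact: tight_all1.
- by rewrite inE tight_equiv_refl.
- move=> X Y tX tY xX xY; apply: tight_allU => //.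
  by apply/set0Pn; exists x; rewrite inE xX xY.
- move=> y; rewrite inE => /existsP[X /and3P[xX yX tX]].
  exists X; rewrite tX xX yX /=; apply/subsetP=> z zX; rewrite inE.
  by apply/existsP; exists X; rewrite xX zX.
Qed.

End Packings.

Section Cuts.
Variables (V : finType) (E : {set {set V}}).
Implicit Types (C : {set V}) (e : {set V}).

Definition crosses e C := (e :&: C != set0) && ~~ (e \subset C).

Definition cut C := [set e in E | crosses e C].

Lemma cut_lower m C x y : edge_connected m E -> x \in C -> y \notin C -> m <= #|cut C|.
Proof.
move=> HC xC yC; rewrite leqNgt; apply/negP => small.
have sE : cut C \subset E by apply/subsetP=> e; rewrite inE => /andP[].
move/negP: yC; apply; apply: (connect_ind (P := fun z => z \in C) xC _ (HC _ sE small x y)).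
move=> a b _ aC /andP[_]; rewrite !inE => /andP[abC abE].
apply: contraT => bC; move: abC; rewrite abE /crosses /=.
have -> : [set a; b] :&: C != set0 by apply/set0Pn; exists a; rewrite !inE eqxx aC.
by rewrite subUset !sub1set (negbTE bC) andbF.
Qed.

Variable P : {set {set V}}.
Hypothesis partP : partition P [set: V].

Lemma sum_cut_lower m : edge_connected m E -> m * #|P|.-1 <= \sum_(C in P) #|cut C|.
Proof.
have [_ tri P0] := and3P partP.
move=> HC; case: (leqP #|P| 1) => [P1|P2]; first by rewrite (_ : #|P|.-1 = 0) ?muln0 //; lia.
apply: leq_trans (_ : \sum_(C in P) m <= _); first by rewrite sum_nat_const; nia.
apply: leq_sum => C CP.
have [D DP DC] : exists2 D, D \in P & D != C.
  case/card_gt1P: P2 => A [B [AP BP AB]].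
  by case: (A =P C) => [<- | /eqP AneC]; [exists B; rewrite // eq_sym | exists A].
have [x xC] : exists x, x \in C by apply/set0Pn; apply: contraNneq P0 => <-.
have [y yD] : exists y, y \in D by apply/set0Pn; apply: contraNneq P0 => <-.
exact: cut_lower HC xC (negbT (disjointFr ((trivIsetP tri) D C DP CP DC) yD)).
Qed.

Definition inner_count e := \sum_(C in P) (e \subset C : nat).
Definition crossing_count e := \sum_(C in P) (crosses e C : nat).

Lemma partition_sum_mem x : \sum_(C in P) (x \in C : nat) = 1.
Proof.
have [/eqP cov tri _] := and3P partP.
have xP : x \in cover P by rewrite cov inE.
rewrite (sum_bool_card P (fun C => x \in C)).
suff -> : [set C in P | x \in C] = [set pblock P x] by rewrite cards1.
apply/setP=> C; rewrite !inE; apply/andP/eqP => [[CP xC]|->].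
  by rewrite (def_pblock tri CP xC).
by rewrite pblock_mem // mem_pblock.
Qed.

Lemma crosses_pair a b C : a != b ->
  (a \in C) + (b \in C) = 2 * ([set a; b] \subset C) + crosses [set a; b] C.
Proof.
move=> ab; rewrite /crosses subUset !sub1set.
have -> : ([set a; b] :&: C != set0) = (a \in C) || (b \in C).
  apply/set0Pn/orP => [[z]|[aC|bC]].
  - by rewrite !inE => /andP[/orP[]/eqP-> ->]; [left|right].
  - by exists a; rewrite !inE eqxx aC.
  - by exists b; rewrite !inE eqxx bC orbT.
by case: (a \in C); case: (b \in C).
Qed.

Hypothesis E2 : is_edge_set E.

(* Each endpoint of [e] lies in exactly one part. *)
Lemma crossing_inner_count e : e \in E -> crossing_count e + 2 * inner_count e = 2.
Proof.
move=> /(forall_inP E2) /cards2P[a [b [ab ->]]].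
have ends : \sum_(C in P) ((a \in C : nat) + (b \in C : nat)) = 2.
  by rewrite big_split /= !partition_sum_mem.
rewrite (eq_bigr _ (fun C _ => crosses_pair C ab)) big_split /= -big_distrr /= in ends.
by rewrite /crossing_count /inner_count addnC.
Qed.

Lemma sum_cut : \sum_(C in P) #|cut C| = \sum_(e in E) crossing_count e.
Proof. by under eq_bigr => C _ do rewrite /cut -sum_bool_card; rewrite exchange_big. Qed.

End Cuts.

Lemma sum_leq_const_eq (I : finType) (a : I -> nat) c :
  (forall i, a i <= c) -> #|I| * c <= \sum_i a i -> forall j, a j = c.
Proof.
move=> le ge j; apply/eqP; rewrite eqn_leq le /=; apply: contraLR ge; rewrite -!ltnNge => lt.
rewrite -sum_nat_const (bigD1 j) // [X in _ < X](bigD1 j) //=.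
by rewrite -addSn leq_add // leq_sum.
Qed.

Section MaximumPacking.
Variables (V I : finType) (E : {set {set V}}).
Hypothesis E2 : is_edge_set E.
Hypothesis E_conn : edge_connected (2 * #|I|) E.
Variable F0 : packing V I.
Hypothesis F0_packing : forest_packing E F0.
Hypothesis F0_max :
  forall F : packing V I, forest_packing E F -> packing_size F <= packing_size F0.

Let P := equivalence_partition (tight_equiv F0) [set: V].

Let tight_equivT : {in [set: V] & &, equivalence_rel (tight_equiv F0)}.
Proof. by move=> x y z _ _ _; apply: (tight_equiv_equivalence F0_packing E2). Qed.

Let partP : partition P [set: V] := equivalence_partitionP tight_equivT.

Lemma part_tight C i : C \in P -> tight (F0 i) C.
Proof.
case/imsetP=> x _ ->.
rewrite (_ : [set y in _ | _] = [set y | tight_equiv F0 x y]); last first.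
  by apply/setP=> y; rewrite !inE.
by move/forallP: (tight_equiv_class_tight F0_packing E2 x).
Qed.

Lemma unused_crossing_count e : e \in E -> e \notin covered F0 -> crossing_count P e = 0.
Proof.
move=> eE eu; have [a [b [de ab]]] := unused_tight_equiv F0_packing F0_max E2 eE eu.
subst e.
have [/eqP cov tri _] := and3P partP.
have aP : a \in cover P by rewrite cov inE.
have inside : [set a; b] \subset pblock P a.
  rewrite subUset !sub1set mem_pblock aP /=.
  by rewrite (pblock_equivalence_partition tight_equivT) ?inE.
have : 1 <= inner_count P [set a; b].
  by rewrite /inner_count (bigD1 (pblock P a)) ?pblock_mem //= inside.
by have := crossing_inner_count partP E2 eE; lia.
Qed.

Lemma sum_crossing_count_used :
  \sum_(e in E) crossing_count P e <= \sum_i \sum_(e in F0 i) crossing_count P e.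
Proof.
have [FE _ _] := forest_packingP _ _ F0_packing.
rewrite [X in _ <= X](eq_bigr (fun i => \sum_(e in E) (e \in F0 i) * crossing_count P e)).
  rewrite [X in _ <= X]exchange_big; apply: leq_sum => e eE.
  have [/coveredP[i ei]|eu] := boolP (e \in covered F0); last first.
    by rewrite unused_crossing_count.
  by rewrite (bigD1 i) //= ei mul1n leq_addr.
move=> i _; rewrite [RHS]big_mkcond [LHS]big_mkcond; apply: eq_bigr => e _.
by case: (boolP (e \in F0 i)) => [/(subsetP (FE i)) ->|_]; rewrite ?mul1n //; case: (e \in E).
Qed.

Lemma forest_inner_count i : \sum_(e in F0 i) inner_count P e = \sum_(C in P) #|C|.-1.
Proof.
rewrite /inner_count exchange_big /=; apply: eq_bigr => C CP.
by rewrite sum_bool_card; apply/eqP; apply: part_tight.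
Qed.

Lemma forest_crossing_count i :
  \sum_(e in F0 i) crossing_count P e + 2 * \sum_(C in P) #|C|.-1 = 2 * #|F0 i|.
Proof.
have [FE _ _] := forest_packingP _ _ F0_packing.
rewrite -(forest_inner_count i) big_distrr -big_split /= -sum1_card big_distrr /=.
by apply: eq_bigr => e ei; rewrite muln1 (crossing_inner_count partP E2 (subsetP (FE i) e ei)).
Qed.

Lemma partition_card_pred : \sum_(C in P) #|C|.-1 + #|P| = #|V|.
Proof.
have [_ _ P0] := and3P partP.
rewrite -sum1_card -big_split /= -cardsT (card_partition partP).
apply: eq_bigr => C CP; rewrite addn1 prednK // card_gt0.
by apply: contraNneq P0 => <-.
Qed.

(* Every edge crossing [P] is used, and each forest spans a tree on each part. *)
Lemma packing_size_lower : #|I| * #|V|.-1 <= packing_size F0.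
Proof.
have hV := partition_card_pred.
have hcut := sum_cut_lower partP E_conn.
have hE := sum_cut E P.
have hused := sum_crossing_count_used.
have hF : \sum_i (\sum_(e in F0 i) crossing_count P e + 2 * \sum_(C in P) #|C|.-1)
          = 2 * packing_size F0.
  by rewrite /packing_size [RHS]big_distrr; apply: eq_bigr => i _; apply: forest_crossing_count.
rewrite big_split /= sum_nat_const (_ : #|xpredT| = #|I|) // in hF.
move: hV hcut hE hused hF.
set s := \sum_(C in P) _; set p := #|P|; set X := \sum_(C in P) _.
set Y := \sum_(e in E) _; set Z := \sum_i _; set t := packing_size F0.
clearbody s p X Y Z t; nia.
Qed.

Lemma max_packing_spanning i : #|F0 i| = #|V|.-1.
Proof.
have [_ Ff _] := forest_packingP _ _ F0_packing.
apply: sum_leq_const_eq packing_size_lower i => j.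
by rewrite -spannedT -cardsT forest_spanned.
Qed.

End MaximumPacking.

Theorem tree_packing (V I : finType) (E : {set {set V}}) :
  is_edge_set E -> edge_connected (2 * #|I|) E ->
  exists2 F : packing V I, forest_packing E F & forall i, #|F i| = #|V|.-1.
Proof.
move=> E2 E_conn.
have empty : forest_packing E ([ffun=> set0] : packing V I).
  apply/forest_packingP; split=> [i|i|i j _]; rewrite !ffunE.
  - exact: sub0set.
  - apply/forallP=> X; rewrite /spanned (_ : [set f in set0 | _] = set0) ?cards0 //.
    by apply/setP=> f; rewrite !inE.
  - by rewrite -setI_eq0 set0I.
have [F0 F0_packing F0_max] := arg_maxnP (@packing_size V I) empty.
by exists F0 => // i; exact: (max_packing_spanning E2 E_conn F0_packing F0_max).
Qed.

Lemma tight22_forestU (V : finType) (A B : {set {set V}}) :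
  0 < #|V| -> forest A -> forest B -> [disjoint A & B] ->
  #|A| = #|V|.-1 -> #|B| = #|V|.-1 -> tight22 (A :|: B).
Proof.
move=> V0 fA fB AB cA cB; split; last first.
  by rewrite cardsU (disjoint_setI0 AB) cards0 cA cB; lia.
move=> X F' /andP[sF /forall_inP sX].
have : #|F'| <= spanned (A :|: B) X.
  by apply/subset_leq_card/subsetP=> f fF; rewrite inE (subsetP sF) ?sX.
have := spannedU A B X; have := forest_spanned X fA; have := forest_spanned X fB.
by rewrite maxn0; lia.
Qed.

Theorem mainTheorem9 (k : nat) (V : finType) (E : {set {set V}}) :
  1 <= k -> 0 < #|V| -> is_edge_set E -> edge_connected (4 * k) E ->
  exists F : 'I_k -> {set {set V}},
    (forall i, F i \subset E) /\
    (forall i, tight22 (F i)) /\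
    (forall i j, i != j -> [disjoint F i & F j]).
Proof.
move=> _ V0 E2 E_conn.
have E_conn' : edge_connected (2 * #|{: 'I_k * bool}|) E.
  by rewrite card_prod card_ord card_bool (_ : 2 * (k * 2) = 4 * k) //; lia.
have [T /forest_packingP[TE Tf Tdisj] spanT] := tree_packing E2 E_conn'.
exists (fun i => T (i, false) :|: T (i, true)); split; [|split] => [i|i|i j ij].
- by rewrite subUset !TE.
- by apply: tight22_forestU; rewrite ?Tf ?spanT // Tdisj // xpair_eqE andbF.
- have ne (b c : bool) : (j, b) != (i, c) by rewrite xpair_eqE eq_sym (negbTE ij).
  by rewrite disjointsU !(disjoint_sym _ (T _ :|: T _)) !disjointsU !Tdisj ?ne.
Qed.
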